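(* Let $\gamma>0$, $A:=K+\gamma M$, $A^{\rm aux}:=G^TAJ^{\rm grad}_{\varepsilon,\bm\beta}$, and let $S^{\rm aux}$ be a translation-invariant node operator with $S^{\rm aux}\varphi(\bm\theta)_N=s(\bm\theta)\varphi(\bm\theta)_N$. Fix $\bm\theta\in[-\pi/2,3\pi/2)^2\setminus\{(0,0)\}$. Then $A^{\rm aux}$ acts on $\mathrm{span}\{\varphi(\bm\theta)_N\}$ as multiplication by the nonzero number $\tfrac{2\gamma}{3}D(\bm\theta)$, and the operator $S^{\rm kc}:=I-J^{\rm grad}_{\varepsilon,\bm\beta}(I-S^{\rm aux})(A^{\rm aux})^{-1}G^TA$, restricted to $F_E(\bm\theta)$ (with $(A^{\rm aux})^{-1}$ the inverse of $A^{\rm aux}$ on $\mathrm{span}\{\varphi(\bm\theta)_N\}$), satisfies $$S^{\rm kc}\psi_J(\bm\theta)_E=s(\bm\theta)\psi_J(\bm\theta)_E,\qquad S^{\rm kc}\psi_s(\bm\theta)_E=\frac{2(s(\bm\theta)-1)s_1s_2(\tilde c_2-\tilde c_1)}{D(\bm\theta)}\psi_J(\bm\theta)_E+\psi_s(\bm\theta)_E,$$ where $D(\bm\theta)=(2+\tilde c_2)s_1^2\sigma_1+(2+\tilde c_1)s_2^2\sigma_2-\tfrac{i}{2}\tilde s_1b_1(2+\tilde c_2)-\tfrac{i}{2}\tilde s_2b_2(2+\tilde c_1)$.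
   Context: Fix constants $\varepsilon>0$, $\bm{\beta}=(\beta_1,\beta_2)\in\mathbb{R}^2$, $h>0$, and set $b_j:=\beta_j h$. The Bernoulli function is $B_\varepsilon(s):=\varepsilon\big/\int_0^1 e^{sx/\varepsilon}\,dx$. Write $\sigma_j:=B_\varepsilon(b_j)+B_\varepsilon(-b_j)$, $s_j=\sin(\theta_j/2)$, $\tilde s_j=\sin\theta_j$, $\tilde c_j=\cos\theta_j$. Index sets: nodes $N=\mathbb{Z}^2$, horizontal edges $E_1=(\mathbb{Z}+\frac12)\times\mathbb{Z}$, vertical edges $E_2=\mathbb{Z}\times(\mathbb{Z}+\frac12)$, $E=E_1\cup E_2$, faces $F=(\mathbb{Z}+\frac12)^2$; grid functions are complex-valued functions on these sets; $e_1=(1,0)$, $e_2=(0,1)$. $J^{\rm grad}_{\varepsilon,\bm\beta}$: $(J^{\rm grad}_{\varepsilon,\bm\beta}f)_{\bm k}=-B_\varepsilon(b_j)f_{\bm k-e_j/2}+B_\varepsilon(-b_j)f_{\bm k+e_j/2}$ for $\bm k\in E_j$. $G^T$: $(G^Tg)_{\bm n}=\sum_{j=1}^2\big(g_{\bm n-e_j/2}-g_{\bm n+e_j/2}\big)$. $C^T$: $(C^Tf)_{\bm k}=f_{\bm k+e_2/2}-f_{\bm k-e_2/2}$ for $\bm k\in E_1$, $(C^Tf)_{\bm k}=f_{\bm k-e_1/2}-f_{\bm k+e_1/2}$ for $\bm k\in E_2$. The edge operator $K$ is defined, writing $B=B_\varepsilon$, by: for $\bm k\in E_1$, $h^2(Kf)_{\bm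 k}=\sigma_2f_{\bm k}-B(-b_2)f_{\bm k+e_2}-B(b_2)f_{\bm k-e_2}-B(b_1)f_{\bm k+(-\frac12,\frac12)}+B(-b_1)f_{\bm k+(\frac12,\frac12)}+B(b_1)f_{\bm k+(-\frac12,-\frac12)}-B(-b_1)f_{\bm k+(\frac12,-\frac12)}$; for $\bm k\in E_2$, $h^2(Kf)_{\bm k}=\sigma_1f_{\bm k}-B(b_1)f_{\bm k-e_1}-B(-b_1)f_{\bm k+e_1}-B(-b_2)f_{\bm k+(-\frac12,\frac12)}+B(-b_2)f_{\bm k+(\frac12,\frac12)}+B(b_2)f_{\bm k+(-\frac12,-\frac12)}-B(b_2)f_{\bm k+(\frac12,-\frac12)}$. The edge mass operator $M$: $(Mf)_{\bm k}=\frac23f_{\bm k}+\frac16(f_{\bm k+e_2}+f_{\bm k-e_2})$ for $\bm k\in E_1$, and $(Mf)_{\bm k}=\frac23f_{\bm k}+\frac16(f_{\bm k+e_1}+f_{\bm k-e_1})$ for $\bm k\in E_2$. Fourier modes: $\varphi(\bm\theta)_S(\bm k):=e^{i\bm\theta\cdot\bm k}$ for $\bm k\in S\in\{N,E,F\}$; $\varphi_j(\bm\theta)_E:=\chi_{E_j}\varphi(\bm\theta)_E$; $F_E(\bm\theta):=\mathrm{span}\{\varphi_1(\bm\theta)_E,\varphi_2(\bm\theta)_E\}$; $\psi_J(\bm\theta)_E:=J^{\rm grad}_{\varepsilon,\bm\beta}\varphi(\bm\theta)_N$, $\psi_s(\bm\theta)_E:=C^T\varphi(\bm\theta)_F$.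 *)

From Stdlib Require Import Reals ZArith Lra.
From Coquelicot Require Import Coquelicot.

Open Scope R_scope.

Definition Bern (eps s : R) : R := eps / RInt (fun x => exp (s * x / eps)) 0 1.

(** Grid points in DOUBLED coordinates: the point (x,y) in (1/2 Z)^2 is
    encoded as (2x,2y) in Z^2.  Hence
      nodes N  = (even,even), horizontal edges E1 = (odd,even),
      vertical edges E2 = (even,odd), faces F = (odd,odd).
    A shift by e_j/2 is a shift by 1 in coordinate j, a shift by e_j is 2. *)
Definition pt := (Z * Z)%type.

(** Grid functions: complex valued functions on Z^2 (doubled coordinates);
    a grid function on a set S in {N,E,F} is one vanishing off S.  All the
    operators below produce functions vanishing off their target set. *)
Definition grid := pt -> C.

Definition isN  (p : pt) : bool := Z.even (fst p) && Z.even (snd p).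
Definition isE1 (p : pt) : bool := Z.odd (fst p) && Z.even (snd p).
Definition isE2 (p : pt) : bool := Z.even (fst p) && Z.odd (snd p).
Definition isE  (p : pt) : bool := isE1 p || isE2 p.
Definition isF  (p : pt) : bool := Z.odd (fst p) && Z.odd (snd p).

Definition shift (p : pt) (a b : Z) : pt := (fst p + a, snd p + b)%Z.

Definition cis (t : R) : C := (cos t, sin t).

(** Fourier mode phi(theta)_S(k) = e^{i theta . k} for k in S (0 elsewhere);
    the actual coordinates of the doubled point p are p/2. *)
Definition phi (S : pt -> bool) (th1 th2 : R) : grid :=
  fun p => if S p then cis (th1 * (IZR (fst p) / 2) + th2 * (IZR (snd p) / 2))
           else 0%C.

Definition phiN := phi isN.
Definition phiE := phi isE.
Definition phiF := phi isF.
Definition phi1E := phi isE1.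
Definition phi2E := phi isE2.

Section Ops.
Variables (eps beta1 beta2 h gamma : R).

Let b1 := beta1 * h.
Let b2 := beta2 * h.
Let B := Bern eps.
Definition sigma1 := Bern eps (beta1 * h) + Bern eps (- (beta1 * h)).
Definition sigma2 := Bern eps (beta2 * h) + Bern eps (- (beta2 * h)).

Definition Jgrad (f : grid) : grid := fun k =>
  if isE1 k then (- RtoC (B b1) * f (shift k (-1) 0) + RtoC (B (- b1)) * f (shift k 1 0))%C
  else if isE2 k then (- RtoC (B b2) * f (shift k 0 (-1)) + RtoC (B (- b2)) * f (shift k 0 1))%C
  else 0%C.

Definition GT (g : grid) : grid := fun n =>
  if isN n then
    ((g (shift n (-1) 0) - g (shift n 1 0)) + (g (shift n 0 (-1)) - g (shift n 0 1)))%C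
  else 0%C.

Definition CT (f : grid) : grid := fun k =>
  if isE1 k then (f (shift k 0 1) - f (shift k 0 (-1)))%C
  else if isE2 k then (f (shift k (-1) 0) - f (shift k 1 0))%C
  else 0%C.

Definition Kop (f : grid) : grid := fun k =>
  if isE1 k then
    (/ RtoC (h ^ 2) *
     (RtoC sigma2 * f k - RtoC (B (- b2)) * f (shift k 0 2) - RtoC (B b2) * f (shift k 0 (-2))
      - RtoC (B b1) * f (shift k (-1) 1) + RtoC (B (- b1)) * f (shift k 1 1)
      + RtoC (B b1) * f (shift k (-1) (-1)) - RtoC (B (- b1)) * f (shift k 1 (-1))))%C
  else if isE2 k then
    (/ RtoC (h ^ 2) *
     (RtoC sigma1 * f k - RtoC (B b1) * f (shift k (-2) 0) - RtoC (B (- b1)) * f (shift k 2 0)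
      - RtoC (B (- b2)) * f (shift k (-1) 1) + RtoC (B (- b2)) * f (shift k 1 1)
      + RtoC (B b2) * f (shift k (-1) (-1)) - RtoC (B b2) * f (shift k 1 (-1))))%C
  else 0%C.

Definition Mop (f : grid) : grid := fun k =>
  if isE1 k then (RtoC (2/3) * f k + RtoC (1/6) * (f (shift k 0 2) + f (shift k 0 (-2))))%C
  else if isE2 k then (RtoC (2/3) * f k + RtoC (1/6) * (f (shift k 2 0) + f (shift k (-2) 0)))%C
  else 0%C.

Definition Aop (f : grid) : grid := fun k => (Kop f k + RtoC gamma * Mop f k)%C.

Definition Aaux (f : grid) : grid := GT (Aop (Jgrad f)).

Definition psiJ (th1 th2 : R) : grid := Jgrad (phiN th1 th2).
Definition psis (th1 th2 : R) : grid := CT (phiF th1 th2).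

Definition Dsym (th1 th2 : R) : C :=
  let s1 := sin (th1 / 2) in let s2 := sin (th2 / 2) in
  let ts1 := sin th1 in let ts2 := sin th2 in
  let tc1 := cos th1 in let tc2 := cos th2 in
  (RtoC ((2 + tc2) * s1 ^ 2 * sigma1 + (2 + tc1) * s2 ^ 2 * sigma2)
   - Ci * RtoC (/ 2 * ts1 * b1 * (2 + tc2))
   - Ci * RtoC (/ 2 * ts2 * b2 * (2 + tc1)))%C.

(** S^kc applied to an edge function v, given w = (A^aux)^{-1} G^T A v :
    S^kc v = v - J^grad (I - S^aux) w. *)
Definition Skc_with (Saux : grid -> grid) (v w : grid) : grid :=
  fun k => (v k - Jgrad (fun n => w n - Saux w n) k)%C.

End Ops.

Definition translation_invariant_node_op (S : grid -> grid) : Prop :=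
  (forall f g p, S (fun q => f q + g q)%C p = (S f p + S g p)%C) /\
  (forall (c : C) f p, S (fun q => c * f q)%C p = (c * S f p)%C) /\
  (forall f (a b : Z) p,
      S (fun q => f (shift q (2 * a) (2 * b))) p = S f (shift p (2 * a) (2 * b))).

Definition in_span_phiN (th1 th2 : R) (w : grid) : Prop :=
  exists c : C, forall p, w p = (c * phiN th1 th2 p)%C.

From Pilot Require Import Defs.
From Stdlib Require Import Reals ZArith Lra FunctionalExtensionality.
From Coquelicot Require Import Coquelicot.
Open Scope R_scope.

(* The operators are translation invariant on the staggered grid, so they map
   Fourier modes to Fourier modes: with [z_j = e^{i th_j / 2}], the operators
   J^grad, K, M, G^T and C^T act on span{phi_N} and F_E(theta) through explicit
   symbols in [z_j] and [B(+-b_j)].  Multiplying them out, using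
   [B(-b) = B(b) + b], gives A^aux phi_N = (2 gamma / 3) D phi_N and
   G^T A psi_s = (2 gamma / 3) 2 s_1 s_2 (c_2 - c_1) phi_N.  The real part of D
   is (2 + c_2) s_1^2 sigma_1 + (2 + c_1) s_2^2 sigma_2 > 0, because
   [sigma_j > 0] and [s_j <> 0] for [th_j <> 0] in [-pi/2, 3pi/2).  Hence
   (A^aux)^{-1} G^T A psi = c phi_N with c = 1 for psi_J and
   c = 2 s_1 s_2 (c_2 - c_1) / D for psi_s, and since S^aux phi_N = s phi_N,
   S^kc psi = psi + c (s - 1) psi_J. *)

Lemma RInt_exp_scaled (eps s : R) : eps <> 0 -> s <> 0 ->
  RInt (fun x => exp (s * x / eps)) 0 1 = eps / s * (exp (s / eps) - 1).
Proof.
  intros He Hs. apply is_RInt_unique.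
  replace (eps / s * (exp (s / eps) - 1))
    with (minus (eps / s * exp (s * 1 / eps)) (eps / s * exp (s * 0 / eps))).
  - apply (is_RInt_derive (fun x => eps / s * exp (s * x / eps))).
    + intros x _. auto_derive; [auto|]. unfold Rdiv. field; auto.
    + intros x _. apply (ex_derive_continuous (fun x => exp (s * x / eps))). auto_derive. auto.
  - unfold minus, plus, opp; simpl.
    rewrite Rmult_0_r, Rmult_1_r, Rdiv_0_l, exp_0. ring.
Qed.

Lemma exp_div_neq1 s eps : 0 < eps -> s <> 0 -> exp (s / eps) <> 1.
Proof.
  intros He Hs E. rewrite <- exp_0 in E. apply exp_inv in E.
  apply Hs. apply (Rmult_eq_reg_r (/ eps)); [lra | apply Rinv_neq_0_compat; lra].
Qed.

Lemma Bern_closed_form eps s : 0 < eps -> s <> 0 -> Bern eps s = s / (exp (s / eps) - 1).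
Proof.
  intros He Hs. unfold Bern. rewrite RInt_exp_scaled by lra.
  assert (exp (s / eps) <> 1) by now apply exp_div_neq1.
  field. repeat split; lra.
Qed.

Lemma Bern0 eps : 0 < eps -> Bern eps 0 = eps.
Proof.
  intros He. unfold Bern.
  rewrite (RInt_ext _ (fun _ => 1)).
  - rewrite RInt_const. unfold scal; simpl. unfold mult; simpl. field.
  - intros x _. now rewrite Rmult_0_l, Rdiv_0_l, exp_0.
Qed.

Lemma Bern_gt0 eps s : 0 < eps -> 0 < Bern eps s.
Proof.
  intros He. destruct (Req_dec s 0) as [->|Hs]; [now rewrite Bern0|].
  rewrite Bern_closed_form by auto.
  destruct (Rlt_or_le 0 s).
  - assert (1 < exp (s / eps)).
    { rewrite <- exp_0. apply exp_increasing, Rdiv_lt_0_compat; auto. }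
    apply Rdiv_lt_0_compat; lra.
  - assert (exp (s / eps) < 1).
    { rewrite <- exp_0. apply exp_increasing.
      apply Rmult_neg_pos; [lra | now apply Rinv_0_lt_compat]. }
    apply Rmult_neg_neg; [lra | apply Rinv_lt_0_compat; lra].
Qed.

Lemma Bern_opp eps s : 0 < eps -> Bern eps (- s) = Bern eps s + s.
Proof.
  intros He. destruct (Req_dec s 0) as [->|Hs]; [rewrite Ropp_0, Bern0; auto; ring|].
  rewrite !Bern_closed_form by (auto; lra).
  replace (- s / eps) with (- (s / eps)) by (field; lra).
  rewrite exp_Ropp.
  assert (exp (s / eps) <> 1) by now apply exp_div_neq1.
  assert (0 < exp (s / eps)) by apply exp_pos.
  field. repeat split; lra.
Qed.

Lemma cis_add a b : cis (a + b) = (cis a * cis b)%C.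
Proof. unfold cis, Cmult; simpl. rewrite cos_plus, sin_plus. f_equal; ring. Qed.

Lemma cis_neq0 a : cis a <> 0%C.
Proof.
  intro E. unfold cis in E. injection E as Ec Es.
  assert (H := sin2_cos2 a). unfold Rsqr in H. rewrite Ec, Es in H. lra.
Qed.

Lemma cis_opp a : cis (- a) = (/ cis a)%C.
Proof.
  unfold cis, Cinv; simpl. rewrite cos_neg, sin_neg.
  assert (H := sin2_cos2 a). unfold Rsqr in H.
  replace (cos a * (cos a * 1) + sin a * (sin a * 1)) with 1 by lra.
  f_equal; field.
Qed.

Lemma cis_inv a : (/ cis a)%C = (cos a, - sin a).
Proof. rewrite <- cis_opp. unfold cis. now rewrite cos_neg, sin_neg. Qed.

Lemma cis_grid_shift th1 th2 x y a b :
  cis (th1 * (IZR (x + a) / 2) + th2 * (IZR (y + b) / 2)) =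
  (cis (th1 * (IZR x / 2) + th2 * (IZR y / 2))
   * cis (th1 * (IZR a / 2)) * cis (th2 * (IZR b / 2)))%C.
Proof. rewrite <- !cis_add. f_equal. rewrite !plus_IZR. field. Qed.

Lemma cis_offset0 t : cis (t * (IZR 0 / 2)) = 1%C.
Proof.
  replace (t * (IZR 0 / 2)) with 0 by (simpl; field).
  unfold cis. now rewrite cos_0, sin_0.
Qed.

Lemma cis_offset1 t : cis (t * (IZR 1 / 2)) = cis (t / 2).
Proof. f_equal. simpl. field. Qed.

Lemma cis_offsetN1 t : cis (t * (IZR (-1) / 2)) = (/ cis (t / 2))%C.
Proof. rewrite <- cis_opp. f_equal. simpl. field. Qed.

Lemma cis_offset2 t : cis (t * (IZR 2 / 2)) = (cis (t / 2) * cis (t / 2))%C.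
Proof. rewrite <- cis_add. f_equal. simpl. field. Qed.

Lemma cis_offsetN2 t : cis (t * (IZR (-2) / 2)) = (/ (cis (t / 2) * cis (t / 2)))%C.
Proof. rewrite <- cis_add, <- cis_opp. f_equal. simpl. field. Qed.

Lemma phiN_origin th1 th2 : phiN th1 th2 (0%Z, 0%Z) = 1%C.
Proof.
  unfold phiN, phi, isN. cbn [fst snd Z.even andb].
  replace (th1 * (IZR 0 / 2) + th2 * (IZR 0 / 2)) with 0 by (simpl; field).
  unfold cis. now rewrite cos_0, sin_0.
Qed.

Lemma phiN_coef_inj th1 th2 (c d : C) :
  (forall p, (c * phiN th1 th2 p)%C = (d * phiN th1 th2 p)%C) -> c = d.
Proof. intro H. specialize (H (0%Z, 0%Z)). now rewrite phiN_origin, !Cmult_1_r in H. Qed.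

(* A point of [Z^2] is case-split on the parities of its coordinates, and every
   Fourier mode at a shifted point is written as the mode at the point times
   powers of [z_j = e^{i th_j / 2}]. *)
Ltac grid_parity :=
  unfold isN, isE1, isE2, isE, isF, Defs.shift in *; cbn [fst snd] in *;
  rewrite ?Z.even_add, ?Z.odd_add; cbn [Z.even Z.odd];
  rewrite <- ?Z.negb_even.

Ltac grid_cases x y :=
  destruct (Z.even x), (Z.even y); cbn [negb andb orb xorb Bool.eqb];
  rewrite ?cis_grid_shift, ?cis_offset0, ?cis_offset1, ?cis_offsetN1,
    ?cis_offset2, ?cis_offsetN2.

Ltac field_cis := field; repeat split; try apply cis_neq0.

Definition has_FE_coords (th1 th2 : R) (f : grid) (c1 c2 : C) : Prop :=
  forall q, f q = (c1 * phi1E th1 th2 q + c2 * phi2E th1 th2 q)%C.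

Lemma RtoC_sin_mul_sin a b :
  RtoC (sin a * sin b) = (- ((cis a - / cis a) * (cis b - / cis b)) / 4)%C.
Proof.
  rewrite !cis_inv. unfold Cdiv, Cminus, cis, Cplus, Copp, Cmult, Cinv, RtoC; simpl.
  f_equal; field.
Qed.

Lemma RtoC_cos_cis_half t :
  RtoC (cos t) = ((cis (t / 2) * cis (t / 2) + / (cis (t / 2) * cis (t / 2))) / 2)%C.
Proof.
  rewrite <- cis_add. replace (t / 2 + t / 2) with t by field.
  rewrite !cis_inv. unfold Cdiv, Cminus, cis, Cplus, Copp, Cmult, Cinv, RtoC; simpl.
  f_equal; field.
Qed.

Lemma Ci_sin_cis_half t :
  (Ci * RtoC (sin t))%C = ((cis (t / 2) * cis (t / 2) - / (cis (t / 2) * cis (t / 2))) / 2)%C.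
Proof.
  rewrite <- cis_add. replace (t / 2 + t / 2) with t by field.
  rewrite !cis_inv. unfold Cdiv, Cminus, cis, Ci, Cplus, Copp, Cmult, Cinv, RtoC; simpl.
  f_equal; field.
Qed.

Lemma RtoC_Bern_opp eps s : 0 < eps ->
  RtoC (Bern eps (- s)) = (RtoC (Bern eps s) + RtoC s)%C.
Proof. intros. rewrite Bern_opp by auto. apply RtoC_plus. Qed.

Lemma Dsym_complex eps beta1 beta2 h th1 th2 : Dsym eps beta1 beta2 h th1 th2 =
  (RtoC (2 + cos th2) * RtoC (sin (th1 / 2) * sin (th1 / 2)) * RtoC (sigma1 eps beta1 h)
 + RtoC (2 + cos th1) * RtoC (sin (th2 / 2) * sin (th2 / 2)) * RtoC (sigma2 eps beta2 h)
 - / 2 * (Ci * RtoC (sin th1)) * RtoC (beta1 * h) * RtoC (2 + cos th2)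
 - / 2 * (Ci * RtoC (sin th2)) * RtoC (beta2 * h) * RtoC (2 + cos th1))%C.
Proof.
  unfold Dsym. cbv zeta.
  unfold Cdiv, Cminus, Ci, Cplus, Copp, Cmult, Cinv, RtoC; simpl.
  f_equal; field.
Qed.

Section Symbols.
Variables (eps beta1 beta2 h gamma th1 th2 : R).
Hypothesis eps_gt0 : 0 < eps.
Hypothesis h_neq0 : h <> 0.

Let z1 := cis (th1 / 2).
Let z2 := cis (th2 / 2).
Let B1 := RtoC (Bern eps (beta1 * h)).
Let B1m := RtoC (Bern eps (- (beta1 * h))).
Let B2 := RtoC (Bern eps (beta2 * h)).
Let B2m := RtoC (Bern eps (- (beta2 * h))).

Definition Jsym1 : C := (- B1 * / z1 + B1m * z1)%C.
Definition Jsym2 : C := (- B2 * / z2 + B2m * z2)%C.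

Definition Ksym11 : C :=
  (/ RtoC (h ^ 2) * (RtoC (sigma2 eps beta2 h) - B2m * (z2 * z2) - B2 * / (z2 * z2)))%C.
Definition Ksym12 : C :=
  (/ RtoC (h ^ 2) * (- B1 * (/ z1 * z2) + B1m * (z1 * z2) + B1 * (/ z1 * / z2) - B1m * (z1 * / z2)))%C.
Definition Ksym21 : C :=
  (/ RtoC (h ^ 2) * (- B2m * (/ z1 * z2) + B2m * (z1 * z2) + B2 * (/ z1 * / z2) - B2 * (z1 * / z2)))%C.
Definition Ksym22 : C :=
  (/ RtoC (h ^ 2) * (RtoC (sigma1 eps beta1 h) - B1 * / (z1 * z1) - B1m * (z1 * z1)))%C.

Definition Msym1 : C := (RtoC (2/3) + RtoC (1/6) * (z2 * z2 + / (z2 * z2)))%C.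
Definition Msym2 : C := (RtoC (2/3) + RtoC (1/6) * (z1 * z1 + / (z1 * z1)))%C.

Definition Asym11 : C := (Ksym11 + RtoC gamma * Msym1)%C.
Definition Asym22 : C := (Ksym22 + RtoC gamma * Msym2)%C.

Lemma Jgrad_mode f c : (forall q, f q = c * phiN th1 th2 q)%C ->
  has_FE_coords th1 th2 (Jgrad eps beta1 beta2 h f) (c * Jsym1) (c * Jsym2).
Proof.
  intros Hf [x y]. unfold Jgrad. rewrite !Hf.
  unfold phiN, phi1E, phi2E, phi, Jsym1, Jsym2. fold z1 z2 B1 B1m B2 B2m.
  grid_parity. grid_cases x y; fold z1 z2; field_cis.
Qed.

Lemma Kop_mode f c1 c2 : has_FE_coords th1 th2 f c1 c2 ->
  has_FE_coords th1 th2 (Kop eps beta1 beta2 h f)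
    (Ksym11 * c1 + Ksym12 * c2) (Ksym21 * c1 + Ksym22 * c2).
Proof.
  intros Hf [x y]. unfold Kop. rewrite !Hf.
  unfold phi1E, phi2E, phi, Ksym11, Ksym12, Ksym21, Ksym22. fold z1 z2 B1 B1m B2 B2m.
  grid_parity. grid_cases x y; fold z1 z2; field_cis;
    intro E; apply RtoC_inj in E; revert E; now apply pow_nonzero.
Qed.

Lemma Mop_mode f c1 c2 : has_FE_coords th1 th2 f c1 c2 ->
  has_FE_coords th1 th2 (Mop f) (Msym1 * c1) (Msym2 * c2).
Proof.
  intros Hf [x y]. unfold Mop. rewrite !Hf. unfold phi1E, phi2E, phi, Msym1, Msym2.
  grid_parity. grid_cases x y; fold z1 z2; field_cis.
Qed.

Lemma Aop_mode f c1 c2 : has_FE_coords th1 th2 f c1 c2 ->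
  has_FE_coords th1 th2 (Aop eps beta1 beta2 h gamma f)
    (Asym11 * c1 + Ksym12 * c2) (Ksym21 * c1 + Asym22 * c2).
Proof.
  intros Hf p. unfold Aop, Asym11, Asym22.
  rewrite (Kop_mode f c1 c2 Hf), (Mop_mode f c1 c2 Hf). ring.
Qed.

Lemma GT_mode f c1 c2 : has_FE_coords th1 th2 f c1 c2 ->
  forall p, GT f p = ((c1 * (/ z1 - z1) + c2 * (/ z2 - z2)) * phiN th1 th2 p)%C.
Proof.
  intros Hf [x y]. unfold GT. rewrite !Hf. unfold phiN, phi1E, phi2E, phi.
  grid_parity. grid_cases x y; fold z1 z2; field_cis.
Qed.

Lemma psis_mode : has_FE_coords th1 th2 (psis th1 th2) (z2 - / z2) (/ z1 - z1).
Proof.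
  intros [x y]. unfold psis, CT, phiF, phi1E, phi2E, phi.
  grid_parity. grid_cases x y; fold z1 z2; field_cis.
Qed.

(* Everything is expressed through [z_j], [B(b_j)] and [b_j] (using
   [B(-b) = B(b) + b]), so that the symbol identities become identities of
   rational functions. *)
Ltac to_atoms :=
  unfold B1, B1m, B2, B2m, sigma1, sigma2;
  rewrite ?RtoC_Bern_opp by exact eps_gt0;
  rewrite ?RtoC_sin_mul_sin, ?Ci_sin_cis_half, ?RtoC_plus, ?RtoC_Bern_opp by exact eps_gt0;
  rewrite ?RtoC_cos_cis_half, ?RtoC_div by lra.

Lemma Aaux_symbol :
  ((Asym11 * Jsym1 + Ksym12 * Jsym2) * (/ z1 - z1)
   + (Ksym21 * Jsym1 + Asym22 * Jsym2) * (/ z2 - z2))%C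
  = (RtoC (2 * gamma / 3) * Dsym eps beta1 beta2 h th1 th2)%C.
Proof.
  rewrite Dsym_complex.
  unfold Asym11, Asym22, Jsym1, Jsym2, Ksym11, Ksym12, Ksym21, Ksym22, Msym1, Msym2.
  fold z1 z2. to_atoms. fold z1 z2. rewrite (RtoC_mult 2 gamma).
  field_cis. intro E; apply RtoC_inj in E; revert E; now apply pow_nonzero.
Qed.

Lemma GT_A_CT_symbol :
  let c1 := (z2 - / z2)%C in let c2 := (/ z1 - z1)%C in
  ((Asym11 * c1 + Ksym12 * c2) * (/ z1 - z1) + (Ksym21 * c1 + Asym22 * c2) * (/ z2 - z2))%C
  = (RtoC (2 * gamma / 3)
     * (2 * RtoC (sin (th1 / 2) * sin (th2 / 2) * (cos th2 - cos th1))))%C.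
Proof.
  cbv zeta.
  unfold Asym11, Asym22, Ksym11, Ksym12, Ksym21, Ksym22, Msym1, Msym2.
  rewrite (RtoC_mult (sin (th1 / 2) * sin (th2 / 2))), RtoC_minus.
  fold z1 z2. to_atoms. fold z1 z2. rewrite (RtoC_mult 2 gamma).
  field_cis. intro E; apply RtoC_inj in E; revert E; now apply pow_nonzero.
Qed.

Lemma Aaux_span w c : (forall q, w q = c * phiN th1 th2 q)%C -> forall p,
  Aaux eps beta1 beta2 h gamma w p
  = (c * (RtoC (2 * gamma / 3) * Dsym eps beta1 beta2 h th1 th2) * phiN th1 th2 p)%C.
Proof.
  intros Hw p. rewrite <- Aaux_symbol. unfold Aaux.
  rewrite (GT_mode _ _ _ (Aop_mode _ _ _ (Jgrad_mode w c Hw))). fold z1 z2. ring.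
Qed.

Lemma GT_A_psis p :
  GT (Aop eps beta1 beta2 h gamma (psis th1 th2)) p
  = (RtoC (2 * gamma / 3)
     * (2 * RtoC (sin (th1 / 2) * sin (th2 / 2) * (cos th2 - cos th1)))
     * phiN th1 th2 p)%C.
Proof.
  rewrite <- GT_A_CT_symbol. cbv zeta.
  rewrite (GT_mode _ _ _ (Aop_mode _ _ _ psis_mode)). fold z1 z2. ring.
Qed.

End Symbols.

Lemma sin_half_neq0 t : - PI / 2 <= t < 3 * PI / 2 -> t <> 0 -> sin (t / 2) <> 0.
Proof.
  intros [Hlo Hhi] Ht. assert (HPI := PI_RGT_0).
  destruct (Rlt_or_le 0 t).
  - apply Rgt_not_eq, sin_gt_0; lra.
  - apply Rlt_not_eq, sin_lt_0_var; lra.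
Qed.

Lemma Bern_sym_sum_gt0 eps s : 0 < eps -> 0 < Bern eps s + Bern eps (- s).
Proof. intros He. pose proof (Bern_gt0 eps s He). pose proof (Bern_gt0 eps (- s) He). lra. Qed.

Lemma weighted_squares_gt0 w1 w2 a1 a2 s1 s2 :
  1 <= w1 -> 1 <= w2 -> 0 < s1 -> 0 < s2 -> a1 <> 0 \/ a2 <> 0 ->
  0 < w1 * a1 ^ 2 * s1 + w2 * a2 ^ 2 * s2.
Proof.
  intros Hw1 Hw2 Hs1 Hs2 Ha.
  assert (0 <= a1 ^ 2) by apply pow2_ge_0. assert (0 <= a2 ^ 2) by apply pow2_ge_0.
  assert (0 <= w1 * a1 ^ 2 * s1) by (apply Rmult_le_pos; [apply Rmult_le_pos |]; lra).
  assert (0 <= w2 * a2 ^ 2 * s2) by (apply Rmult_le_pos; [apply Rmult_le_pos |]; lra).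
  destruct Ha as [Ha | Ha]; apply (pow2_gt_0 _) in Ha.
  - assert (0 < w1 * a1 ^ 2 * s1) by (apply Rmult_lt_0_compat; [apply Rmult_lt_0_compat |]; lra).
    lra.
  - assert (0 < w2 * a2 ^ 2 * s2) by (apply Rmult_lt_0_compat; [apply Rmult_lt_0_compat |]; lra).
    lra.
Qed.

Lemma Re_Dsym eps beta1 beta2 h th1 th2 :
  fst (Dsym eps beta1 beta2 h th1 th2)
  = (2 + cos th2) * sin (th1 / 2) ^ 2 * sigma1 eps beta1 h
    + (2 + cos th1) * sin (th2 / 2) ^ 2 * sigma2 eps beta2 h.
Proof. unfold Dsym, Cminus, Cplus, Copp, Cmult, Ci, RtoC; simpl. ring. Qed.

Lemma Dsym_neq0 eps beta1 beta2 h th1 th2 : 0 < eps ->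
  - PI / 2 <= th1 < 3 * PI / 2 -> - PI / 2 <= th2 < 3 * PI / 2 ->
  (th1, th2) <> (0, 0) -> Dsym eps beta1 beta2 h th1 th2 <> 0%C.
Proof.
  intros He Hth1 Hth2 Hth E. apply (f_equal fst) in E. rewrite Re_Dsym in E.
  revert E. apply Rgt_not_eq, weighted_squares_gt0.
  - pose proof (COS_bound th2); lra.
  - pose proof (COS_bound th1); lra.
  - now apply Bern_sym_sum_gt0.
  - now apply Bern_sym_sum_gt0.
  - destruct (Req_dec th1 0) as [-> | Hth1']; [right | left];
      apply sin_half_neq0; auto; intros ->; now apply Hth.
Qed.

Lemma Jgrad_scale eps beta1 beta2 h (c : C) f p :
  Jgrad eps beta1 beta2 h (fun q => c * f q)%C p = (c * Jgrad eps beta1 beta2 h f p)%C.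
Proof. unfold Jgrad. destruct (isE1 p), (isE2 p); ring. Qed.

Section CoarseCorrection.
Variables (eps beta1 beta2 h th1 th2 : R) (Saux : grid -> grid) (s : C).
Hypothesis Saux_scale : forall (c : C) f p, Saux (fun q => c * f q)%C p = (c * Saux f p)%C.
Hypothesis Saux_phiN : forall p, Saux (phiN th1 th2) p = (s * phiN th1 th2 p)%C.

Lemma Skc_with_span v w c : (forall q, w q = c * phiN th1 th2 q)%C -> forall p,
  Skc_with eps beta1 beta2 h Saux v w p
  = (v p + c * (s - 1) * psiJ eps beta1 beta2 h th1 th2 p)%C.
Proof.
  intros Hw p.
  assert (Ew : w = fun q => (c * phiN th1 th2 q)%C) by (apply functional_extensionality; exact Hw).
  assert (Eres : (fun n => w n - Saux w n)%C = (fun n => c * (1 - s) * phiN th1 th2 n)%C).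
  { apply functional_extensionality. intro n.
    rewrite Ew, Saux_scale, Saux_phiN. ring. }
  unfold Skc_with. rewrite Eres, Jgrad_scale. unfold psiJ. ring.
Qed.

End CoarseCorrection.

Lemma Aaux_span_solve eps beta1 beta2 h gamma th1 th2 w c d :
  0 < eps -> h <> 0 -> (RtoC (2 * gamma / 3) * Dsym eps beta1 beta2 h th1 th2 <> 0)%C ->
  (forall q, w q = c * phiN th1 th2 q)%C ->
  (forall p, Aaux eps beta1 beta2 h gamma w p = d * phiN th1 th2 p)%C ->
  c = (d / (RtoC (2 * gamma / 3) * Dsym eps beta1 beta2 h th1 th2))%C.
Proof.
  intros He Hh Hgain Hw HA.
  assert (Hc : (c * (RtoC (2 * gamma / 3) * Dsym eps beta1 beta2 h th1 th2) = d)%C).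
  { apply (phiN_coef_inj th1 th2). intro p.
    now rewrite <- HA, (Aaux_span _ _ _ _ _ _ _ He Hh w c Hw). }
  rewrite <- Hc. unfold Cdiv. rewrite <- Cmult_assoc, Cinv_r by exact Hgain.
  now rewrite Cmult_1_r.
Qed.

Theorem mainTheorem5
  (eps beta1 beta2 h gamma : R) (Saux : grid -> grid) (s : R -> R -> C)
  (th1 th2 : R) :
  0 < eps -> 0 < h -> 0 < gamma ->
  translation_invariant_node_op Saux ->
  (forall t1 t2 p, Saux (phiN t1 t2) p = (s t1 t2 * phiN t1 t2 p)%C) ->
  - PI / 2 <= th1 < 3 * PI / 2 -> - PI / 2 <= th2 < 3 * PI / 2 ->
  (th1, th2) <> (0, 0) ->
  let D := Dsym eps beta1 beta2 h th1 th2 in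
  let pJ := psiJ eps beta1 beta2 h th1 th2 in
  let ps := psis th1 th2 in
  D <> 0%C /\
  (forall p, Aaux eps beta1 beta2 h gamma (phiN th1 th2) p
             = (RtoC (2 * gamma / 3) * D * phiN th1 th2 p)%C) /\
  (exists a1 a2 : C, forall p, pJ p = (a1 * phi1E th1 th2 p + a2 * phi2E th1 th2 p)%C) /\
  (exists a1 a2 : C, forall p, ps p = (a1 * phi1E th1 th2 p + a2 * phi2E th1 th2 p)%C) /\
  in_span_phiN th1 th2 (GT (Aop eps beta1 beta2 h gamma pJ)) /\
  in_span_phiN th1 th2 (GT (Aop eps beta1 beta2 h gamma ps)) /\
  (forall w, in_span_phiN th1 th2 w ->
     (forall p, Aaux eps beta1 beta2 h gamma w p = GT (Aop eps beta1 beta2 h gamma pJ) p) ->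
     forall p, Skc_with eps beta1 beta2 h Saux pJ w p = (s th1 th2 * pJ p)%C) /\
  (forall w, in_span_phiN th1 th2 w ->
     (forall p, Aaux eps beta1 beta2 h gamma w p = GT (Aop eps beta1 beta2 h gamma ps) p) ->
     forall p, Skc_with eps beta1 beta2 h Saux ps w p =
       (RtoC 2 * (s th1 th2 - 1) * RtoC (sin (th1 / 2) * sin (th2 / 2) * (cos th2 - cos th1))
          / D * pJ p + ps p)%C).
Proof.
  intros He Hh Hg [_ [Saux_scale _]] Saux_phiN Hth1 Hth2 Hth D pJ ps.
  assert (h_neq0 : h <> 0) by lra.
  assert (HD : D <> 0%C) by now apply Dsym_neq0.
  assert (Hgamma : RtoC (2 * gamma / 3) <> 0%C) by (intro E; apply RtoC_inj in E; lra).
  assert (Hgain : (RtoC (2 * gamma / 3) * D <> 0)%C) by now apply Cmult_neq_0.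
  assert (Aaux_phiN : forall p, Aaux eps beta1 beta2 h gamma (phiN th1 th2) p
                                = (RtoC (2 * gamma / 3) * D * phiN th1 th2 p)%C).
  { intro p. rewrite (Aaux_span _ _ _ _ _ _ _ He h_neq0 _ 1) by (intro; ring). fold D. ring. }
  assert (HpJ : has_FE_coords th1 th2 pJ (Jsym1 eps beta1 h th1) (Jsym2 eps beta2 h th2)).
  { intro p. unfold pJ, psiJ. rewrite (Jgrad_mode _ _ _ _ _ _ _ 1) by (intro; ring). ring. }
  split; [exact HD |].
  split; [exact Aaux_phiN |].
  split; [eexists _, _; exact HpJ |].
  split; [eexists _, _; apply psis_mode |].
  split; [eexists; exact Aaux_phiN |].
  split; [eexists; apply GT_A_psis; auto |].
  split; intros w [c Hw] HA p;
    rewrite (Skc_with_span _ _ _ _ _ _ _ (s th1 th2) Saux_scale (Saux_phiN th1 th2) _ _ _ Hw).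
  - erewrite (Aaux_span_solve _ _ _ _ _ _ _ w c _ He h_neq0 Hgain Hw)
      by (intro q; rewrite HA; apply Aaux_phiN).
    fold D pJ. field. now split.
  - erewrite (Aaux_span_solve _ _ _ _ _ _ _ w c _ He h_neq0 Hgain Hw)
      by (intro q; rewrite HA; now apply GT_A_psis).
    fold D pJ. field. now split.
Qed.
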